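(* There exists a closed bounded free spectrahedrop that is closed under entrywise complex conjugation and has no free extreme points.
   Context: For a self-adjoint complex matrix tuple $A$, $\mathcal D_A=\bigcup_n\{X\in SM_n(\mathbb C)^h: I-\sum_iA_i\otimes X_i\succeq0\}$. A free spectrahedrop is a coordinate projection $\mathcal P_g\mathcal D_A$ of a free spectrahedron, i.e. the set of $X$ such that $(X,Y)\in\mathcal D_A$ for some $Y$ of the same size. A set $K$ is closed under complex conjugation if $\overline X\in K$ whenever $X\in K$ (entrywise conjugation). A point $X\in K(n)$ is a free extreme point of a matrix convex set $K$ if whenever $X=\sum_iV_i^*X^{(i)}V_i$ with $X^{(i)}\in K$, $V_i\ne0$, $\sum_iV_i^*V_i=I$, each $X^{(i)}$ is unitarily equivalent to $X$ or to $X\oplus Z$ for some $Z\in K$. *)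

From HB Require Import structures.
From mathcomp Require Import all_boot all_order all_algebra.
From mathcomp Require Import reals.
From mathcomp Require Import complex mxtens.

Set Implicit Arguments.
Unset Strict Implicit.
Unset Printing Implicit Defensive.

Import Order.TTheory GRing.Theory Num.Theory.
Local Open Scope ring_scope.

Section FreeConvexity.
Variable C : numClosedFieldType.

Definition adjmx {m n : nat} (M : 'M[C]_(m, n)) : 'M[C]_(n, m) :=
  (map_mx Num.conj M)^T.

Definition conjmx_entry {m n : nat} (M : 'M[C]_(m, n)) : 'M[C]_(m, n) :=
  map_mx Num.conj M.

Definition hermitian {n : nat} (M : 'M[C]_n) : Prop := adjmx M = M.

Definition psd {n : nat} (M : 'M[C]_n) : Prop :=
  hermitian M /\ forall v : 'cV[C]_n, 0 <= (adjmx v *m M *m v) 0 0.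

Definition herm_tuple {g n : nat} (X : 'I_g -> 'M[C]_n) : Prop :=
  forall i, hermitian (X i).

Definition LMI {d g n : nat} (A : 'I_g -> 'M[C]_d) (X : 'I_g -> 'M[C]_n)
  : 'M[C]_(d * n) :=
  1%:M - \sum_(i < g) (A i *t X i).

Definition freeset (g : nat) := forall n : nat, ('I_g -> 'M[C]_n) -> Prop.

Definition free_spectrahedron {d g : nat} (A : 'I_g -> 'M[C]_d) : freeset g :=
  fun n X => herm_tuple X /\ psd (LMI A X).

Definition pair_tuple {g h n : nat} (X : 'I_g -> 'M[C]_n) (Y : 'I_h -> 'M[C]_n)
  : 'I_(g + h) -> 'M[C]_n :=
  fun i => match split i with inl j => X j | inr j => Y j end.

Definition spectrahedrop {d g h : nat} (A : 'I_(g + h) -> 'M[C]_d) : freeset g :=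
  fun n X => exists Y : 'I_h -> 'M[C]_n, free_spectrahedron A (pair_tuple X Y).

Definition fs_closed {g : nat} (K : freeset g) : Prop :=
  forall n (X : 'I_g -> 'M[C]_n),
    (forall eps : C, 0 < eps ->
       exists Y, K n Y /\ forall i a b, `|Y i a b - X i a b| < eps) ->
    K n X.

Definition fs_bounded {g : nat} (K : freeset g) : Prop :=
  exists r : C, forall n (X : 'I_g -> 'M[C]_n),
    K n X -> psd (r%:M - \sum_(i < g) (X i *m X i)).

Definition fs_conj_closed {g : nat} (K : freeset g) : Prop :=
  forall n (X : 'I_g -> 'M[C]_n), K n X -> K n (fun i => conjmx_entry (X i)).

Definition unit_equiv {g p q : nat} (X : 'I_g -> 'M[C]_p) (Y : 'I_g -> 'M[C]_q)
  : Prop :=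
  exists U : 'M[C]_(p, q),
    adjmx U *m U = 1%:M /\ U *m adjmx U = 1%:M /\
    forall i, adjmx U *m X i *m U = Y i.

Definition free_extreme {g : nat} (K : freeset g) (n : nat)
  (X : 'I_g -> 'M[C]_n) : Prop :=
  K n X /\
  forall (k : nat) (ns : 'I_k -> nat)
         (Xs : forall j : 'I_k, 'I_g -> 'M[C]_(ns j))
         (V : forall j : 'I_k, 'M[C]_(ns j, n)),
    (forall j, K (ns j) (Xs j)) ->
    (forall j, V j != 0) ->
    \sum_(j < k) (adjmx (V j) *m V j) = 1%:M ->
    (forall i, X i = \sum_(j < k) (adjmx (V j) *m Xs j i *m V j)) ->
    forall j, unit_equiv (Xs j) X \/
      exists (m : nat) (Z : 'I_g -> 'M[C]_m),
        K m Z /\ unit_equiv (Xs j) (fun i => block_mx (X i) 0 0 (Z i)).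

End FreeConvexity.

From HB Require Import structures.
From mathcomp Require Import all_boot all_order all_algebra.
From mathcomp Require Import reals complex mxtens.
From mathcomp Require Import ring lra zify.
From mathcomp Require Import boolp classical_sets topology normedtype.

Set Implicit Arguments.
Unset Strict Implicit.
Unset Printing Implicit Defensive.

Import Order.TTheory GRing.Theory Num.Theory.
Import numFieldNormedType.Exports.
Local Open Scope ring_scope.

(* The example is the projection onto real parts of the row ball
   {(T_1, T_2) : T_1 T_1^* + T_2 T_2^* <= I}, written as a free spectrahedron
   in the real and imaginary parts of T_j = X_j + i Y_j.  The row ball is
   invariant under T -> i T and under entrywise conjugation; this gives
   X_j^2, Y_j^2 <= I and the conjugation invariance of the projection.  Since
   the spectrahedron is bounded, each of its levels is compact in real
   coordinates, so the projection is closed.  Given X with witness Y, the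
   n x 2n matrix [T_1 T_2] has a unit kernel vector (z_1, z_2), and
   [[T_j, 0], [z_j^*, 0]] is again a row contraction; its real part W dilates
   X.  Were X a free extreme point, W would be unitarily equivalent to X (+) Z
   with Z a scalar, but comparing tr W_j = tr X_j + tr Z_j with
   tr W_j^2 = tr X_j^2 + |z_j|^2 / 2 forces z = 0. *)

Section Adjoint.
Variable C : numClosedFieldType.

Lemma adjmxE m n (M : 'M[C]_(m, n)) i j : adjmx M i j = (M j i)^*.
Proof. by rewrite !mxE. Qed.

Lemma adjmxK m n (M : 'M[C]_(m, n)) : adjmx (adjmx M) = M.
Proof. by apply/matrixP=> i j; rewrite !adjmxE conjCK. Qed.

Lemma adjmxD m n (M N : 'M[C]_(m, n)) : adjmx (M + N) = adjmx M + adjmx N.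
Proof. by rewrite /adjmx map_mxD linearD. Qed.

Lemma adjmxN m n (M : 'M[C]_(m, n)) : adjmx (- M) = - adjmx M.
Proof. by rewrite /adjmx map_mxN linearN. Qed.

Lemma adjmxB m n (M N : 'M[C]_(m, n)) : adjmx (M - N) = adjmx M - adjmx N.
Proof. by rewrite adjmxD adjmxN. Qed.

Lemma adjmxZ m n c (M : 'M[C]_(m, n)) : adjmx (c *: M) = c^* *: adjmx M.
Proof. by rewrite /adjmx map_mxZ linearZ. Qed.

Lemma adjmx0 m n : adjmx (0 : 'M[C]_(m, n)) = 0.
Proof. by rewrite /adjmx map_mx0 trmx0. Qed.

Lemma adjmx_scalar n a : adjmx (a%:M : 'M[C]_n) = (a^*)%:M.
Proof. by rewrite /adjmx map_scalar_mx tr_scalar_mx. Qed.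

Lemma adjmx1 n : adjmx (1%:M : 'M[C]_n) = 1%:M.
Proof. by rewrite adjmx_scalar conjC1. Qed.

Lemma adjmxM m n p (M : 'M[C]_(m, n)) (N : 'M[C]_(n, p)) :
  adjmx (M *m N) = adjmx N *m adjmx M.
Proof. by rewrite /adjmx map_mxM trmx_mul. Qed.

Lemma adjmx_sum m n I (r : seq I) (P : pred I) (F : I -> 'M[C]_(m, n)) :
  adjmx (\sum_(i <- r | P i) F i) = \sum_(i <- r | P i) adjmx (F i).
Proof. by rewrite /adjmx map_mx_sum linear_sum. Qed.

Lemma adjmx_tens m n p q (M : 'M[C]_(m, n)) (N : 'M[C]_(p, q)) :
  adjmx (M *t N) = adjmx M *t adjmx N.
Proof. by rewrite /adjmx map_mxT trmx_tens. Qed.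

Lemma adjmx_block m1 m2 n1 n2 (A : 'M[C]_(m1, n1)) (B : 'M[C]_(m1, n2))
    (D : 'M[C]_(m2, n1)) (E : 'M[C]_(m2, n2)) :
  adjmx (block_mx A B D E) = block_mx (adjmx A) (adjmx D) (adjmx B) (adjmx E).
Proof. by rewrite /adjmx map_block_mx tr_block_mx. Qed.

Lemma adjmx_col m1 m2 n (A : 'M[C]_(m1, n)) (B : 'M[C]_(m2, n)) :
  adjmx (col_mx A B) = row_mx (adjmx A) (adjmx B).
Proof. by rewrite /adjmx map_col_mx tr_col_mx. Qed.

Lemma adjmx_delta m n (i : 'I_m) (j : 'I_n) :
  adjmx (delta_mx i j : 'M[C]_(m, n)) = delta_mx j i.
Proof.
by apply/matrixP=> a b; rewrite !mxE andbC; case: (_ && _); rewrite ?conjC1 ?conjC0.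
Qed.

End Adjoint.

Section SesquilinearForm.
Variable C : numClosedFieldType.

Definition sform m p (u : 'cV[C]_m) (M : 'M[C]_(m, p)) (w : 'cV[C]_p) : C :=
  (adjmx u *m M *m w) 0 0.

Definition sqnorm m (u : 'cV[C]_m) : C := sform u 1%:M u.

Lemma sformE m p (u : 'cV[C]_m) (M : 'M[C]_(m, p)) w :
  sform u M w = \sum_i \sum_j (u i 0)^* * M i j * w j 0.
Proof.
rewrite /sform mxE exchange_big; apply: eq_bigr => j _.
by rewrite mxE big_distrl; apply: eq_bigr => i _; rewrite !mxE.
Qed.

Lemma sformDl m p (u1 u2 : 'cV[C]_m) (M : 'M[C]_(m, p)) w :
  sform (u1 + u2) M w = sform u1 M w + sform u2 M w.
Proof. by rewrite /sform adjmxD !mulmxDl mxE. Qed.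

Lemma sformDm m p (u : 'cV[C]_m) (M N : 'M[C]_(m, p)) w :
  sform u (M + N) w = sform u M w + sform u N w.
Proof. by rewrite /sform mulmxDr mulmxDl mxE. Qed.

Lemma sformDr m p (u : 'cV[C]_m) (M : 'M[C]_(m, p)) w1 w2 :
  sform u M (w1 + w2) = sform u M w1 + sform u M w2.
Proof. by rewrite /sform mulmxDr mxE. Qed.

Lemma sformNl m p (u : 'cV[C]_m) (M : 'M[C]_(m, p)) w :
  sform (- u) M w = - sform u M w.
Proof. by rewrite /sform adjmxN !mulNmx mxE. Qed.

Lemma sformNm m p (u : 'cV[C]_m) (M : 'M[C]_(m, p)) w :
  sform u (- M) w = - sform u M w.
Proof. by rewrite /sform mulmxN mulNmx mxE. Qed.

Lemma sformNr m p (u : 'cV[C]_m) (M : 'M[C]_(m, p)) w :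
  sform u M (- w) = - sform u M w.
Proof. by rewrite /sform mulmxN mxE. Qed.

Lemma sformZl m p c (u : 'cV[C]_m) (M : 'M[C]_(m, p)) w :
  sform (c *: u) M w = c^* * sform u M w.
Proof. by rewrite /sform adjmxZ -!scalemxAl mxE. Qed.

Lemma sformZm m p c (u : 'cV[C]_m) (M : 'M[C]_(m, p)) w :
  sform u (c *: M) w = c * sform u M w.
Proof. by rewrite /sform -scalemxAr -scalemxAl mxE. Qed.

Lemma sformZr m p c (u : 'cV[C]_m) (M : 'M[C]_(m, p)) w :
  sform u M (c *: w) = c * sform u M w.
Proof. by rewrite /sform -scalemxAr mxE. Qed.

Lemma sform0l m p (M : 'M[C]_(m, p)) w : sform 0 M w = 0.
Proof. by rewrite /sform adjmx0 !mul0mx mxE. Qed.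

Lemma sform0m m p (u : 'cV[C]_m) (w : 'cV[C]_p) : sform u 0 w = 0.
Proof. by rewrite /sform mulmx0 mul0mx mxE. Qed.

Lemma sform0r m p (u : 'cV[C]_m) (M : 'M[C]_(m, p)) : sform u M 0 = 0.
Proof. by rewrite /sform mulmx0 mxE. Qed.

Lemma sformMl m p q (u : 'cV[C]_q) (M : 'M[C]_(m, q)) (N : 'M[C]_(m, p)) w :
  sform (M *m u) N w = sform u (adjmx M *m N) w.
Proof. by rewrite /sform adjmxM !mulmxA. Qed.

Lemma sformMr m p q (u : 'cV[C]_m) (M : 'M[C]_(p, q)) (N : 'M[C]_(m, p)) w :
  sform u N (M *m w) = sform u (N *m M) w.
Proof. by rewrite /sform !mulmxA. Qed.

Lemma sform_sum m p I (r : seq I) (P : pred I) u (F : I -> 'M[C]_(m, p)) w :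
  sform u (\sum_(i <- r | P i) F i) w = \sum_(i <- r | P i) sform u (F i) w.
Proof. by rewrite /sform mulmx_sumr mulmx_suml summxE. Qed.

Lemma sform_scalar n a (u : 'cV[C]_n) : sform u a%:M u = a * sqnorm u.
Proof. by rewrite -scalemx1 sformZm. Qed.

Lemma sform_block m1 m2 p1 p2 (x : 'cV[C]_m1) (x' : 'cV[C]_m2)
    (y : 'cV[C]_p1) (y' : 'cV[C]_p2) P Q S T :
  sform (col_mx x x') (block_mx P Q S T) (col_mx y y') =
  sform x P y + sform x Q y' + sform x' S y + sform x' T y'.
Proof. by rewrite /sform adjmx_col mul_row_block mul_row_col !mulmxDl !mxE; ring. Qed.

Lemma sform_delta m p (a : 'I_m) (b : 'I_p) (M : 'M[C]_(m, p)) :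
  sform (delta_mx a 0) M (delta_mx b 0) = M a b.
Proof. by rewrite /sform adjmx_delta -rowE -colE !mxE. Qed.

Lemma sqnormE m (u : 'cV[C]_m) : sqnorm u = \sum_i `|u i 0| ^+ 2.
Proof.
rewrite /sqnorm /sform mulmx1 mxE; apply: eq_bigr => i _.
by rewrite !mxE normCK mulrC.
Qed.

Lemma sqnorm_ge0 m (u : 'cV[C]_m) : 0 <= sqnorm u.
Proof. by rewrite sqnormE sumr_ge0 // => i _; rewrite exprn_ge0. Qed.

Lemma sqnorm_entry m (u : 'cV[C]_m) a : `|u a 0| ^+ 2 <= sqnorm u.
Proof.
rewrite sqnormE (bigD1 a) //= lerDl sumr_ge0 // => i _; exact: exprn_ge0.
Qed.

Lemma sqnorm_eq0 m (u : 'cV[C]_m) : (sqnorm u == 0) = (u == 0).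
Proof.
apply/idP/eqP=> [|->]; last by rewrite /sqnorm sform0l.
rewrite sqnormE psumr_eq0 => [/allP u0|i _]; last exact: exprn_ge0.
apply/matrixP=> i j; rewrite [j]ord1 mxE; apply/eqP.
by have := u0 i (mem_index_enum i); rewrite sqrf_eq0 normr_eq0.
Qed.

Lemma sqnorm_delta m (a : 'I_m) : sqnorm (delta_mx a 0 : 'cV[C]_m) = 1.
Proof. by rewrite /sqnorm sform_delta mxE eqxx. Qed.

Lemma sqnorm0 m : sqnorm (0 : 'cV[C]_m) = 0.
Proof. exact: sform0l. Qed.

Lemma sqnormZ m c (u : 'cV[C]_m) : sqnorm (c *: u) = `|c| ^+ 2 * sqnorm u.
Proof. by rewrite /sqnorm sformZl sformZr mulrA normCK (mulrC c). Qed.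

Lemma sqnorm_normalize m (u : 'cV[C]_m) : u != 0 ->
  sqnorm ((sqrtC (sqnorm u))^-1 *: u) = 1.
Proof.
rewrite -sqnorm_eq0 => u0; have s0 := sqnorm_ge0 u.
rewrite sqnormZ normfV ger0_norm ?sqrtC_ge0 // exprVn sqrtCK mulVf //.
Qed.

Lemma sqnormB m (u w : 'cV[C]_m) :
  sqnorm (u - w) = sqnorm u - sform u 1%:M w - sform w 1%:M u + sqnorm w.
Proof.
by rewrite /sqnorm sformDl !sformDr !sformNl !sformNr opprK; ring.
Qed.

Lemma sqnorm_mul_cV1 m (z : 'cV[C]_m) (nu : 'cV[C]_1) :
  sqnorm (z *m nu) = sqnorm z * sqnorm nu.
Proof.
rewrite /sqnorm sformMl sformMr mulmx1 -sform_scalar; congr sform.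
by rewrite [LHS]mx11_scalar /sform mulmx1 !mxE.
Qed.

Lemma sqnorm_col m1 m2 (x : 'cV[C]_m1) (x' : 'cV[C]_m2) :
  sqnorm (col_mx x x') = sqnorm x + sqnorm x'.
Proof. by rewrite /sqnorm scalar_mx_block sform_block !sform0m !addr0. Qed.

Lemma sqnorm_herm_mul n (X : 'M[C]_n) u : hermitian X ->
  sqnorm (X *m u) = sform u (X *m X) u.
Proof. by move=> HX; rewrite /sqnorm /sform adjmxM HX mulmx1 !mulmxA. Qed.

Lemma adjmx_conjmx m n (M : 'M[C]_(m, n)) :
  adjmx (conjmx_entry M) = conjmx_entry (adjmx M).
Proof. by apply/matrixP=> i j; rewrite !mxE. Qed.

Lemma sform_conjmx m p (u : 'cV[C]_m) (M : 'M[C]_(m, p)) w :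
  sform u (conjmx_entry M) w = (sform (conjmx_entry u) M (conjmx_entry w))^*.
Proof.
rewrite !sformE rmorph_sum; apply: eq_bigr => i _; rewrite rmorph_sum.
by apply: eq_bigr => j _; rewrite /conjmx_entry !mxE !rmorphM /= !conjCK.
Qed.

Lemma sqnorm_conjmx m (u : 'cV[C]_m) : (sqnorm (conjmx_entry u))^* = sqnorm u.
Proof.
rewrite geC0_conj ?sqnorm_ge0 // !sqnormE.
by apply: eq_bigr => i _; rewrite /conjmx_entry mxE norm_conjC.
Qed.

End SesquilinearForm.

Section TensorSlices.
Variables (C : numClosedFieldType) (d n : nat).

Definition tslice (v : 'cV[C]_(d * n)) (a : 'I_d) : 'cV[C]_n :=
  \col_p v (mxtens_index (a, p)) 0.

Definition tglue (u : 'I_d -> 'cV[C]_n) : 'cV[C]_(d * n) :=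
  \col_k u (mxtens_unindex k).1 (mxtens_unindex k).2 0.

Lemma tglueK u a : tslice (tglue u) a = u a.
Proof. by apply/matrixP=> p j; rewrite [j]ord1 !mxE mxtens_indexK. Qed.

Lemma sum_tens_index (F : 'I_(d * n) -> C) :
  \sum_k F k = \sum_a \sum_p F (mxtens_index (a, p)).
Proof.
rewrite pair_big /= (reindex (@mxtens_index d n)) /=; first by apply: eq_bigr => -[].
by exists (@mxtens_unindex d n) => x _; [exact: mxtens_indexK | exact: mxtens_unindexK].
Qed.

Lemma sqnorm_tslice (v : 'cV[C]_(d * n)) : sqnorm v = \sum_a sqnorm (tslice v a).
Proof.
rewrite sqnormE sum_tens_index; apply: eq_bigr => a _.
by rewrite sqnormE; apply: eq_bigr => p _; rewrite mxE.
Qed.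

Lemma sform_tens (B : 'M[C]_d) (X : 'M[C]_n) (v w : 'cV[C]_(d * n)) :
  sform v (B *t X) w = \sum_a \sum_b B a b * sform (tslice v a) X (tslice w b).
Proof.
rewrite sformE sum_tens_index; apply: eq_bigr => a _.
under eq_bigr => p _ do rewrite sum_tens_index.
rewrite exchange_big /=; apply: eq_bigr => b _.
rewrite sformE big_distrr /=; apply: eq_bigr => p _.
rewrite big_distrr /=; apply: eq_bigr => q _.
by rewrite tensmxE !mxE; ring.
Qed.

Lemma sform_LMI g (A : 'I_g -> 'M[C]_d) (Z : 'I_g -> 'M[C]_n) v :
  sform v (LMI A Z) v = \sum_a sqnorm (tslice v a)
    - \sum_k \sum_a \sum_b A k a b * sform (tslice v a) (Z k) (tslice v b).
Proof.
rewrite /LMI sformDm sformNm -sqnorm_tslice sform_sum.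
by congr (_ - _); apply: eq_bigr => k _; rewrite sform_tens.
Qed.

End TensorSlices.

Section FreeSets.
Variable C : numClosedFieldType.

Lemma pair_tupleL g h n (X : 'I_g -> 'M[C]_n) (Y : 'I_h -> 'M[C]_n) j :
  pair_tuple X Y (lshift h j) = X j.
Proof. by rewrite /pair_tuple (unsplitK (inl j)). Qed.

Lemma pair_tupleR g h n (X : 'I_g -> 'M[C]_n) (Y : 'I_h -> 'M[C]_n) j :
  pair_tuple X Y (rshift g j) = Y j.
Proof. by rewrite /pair_tuple (unsplitK (inr j)). Qed.

Lemma herm_tuple_pair g h n (X : 'I_g -> 'M[C]_n) (Y : 'I_h -> 'M[C]_n) :
  herm_tuple (pair_tuple X Y) <-> herm_tuple X /\ herm_tuple Y.
Proof.
split=> [H|[HX HY] k]; last by case: (split_ordP k) => j ->;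
  rewrite ?pair_tupleL ?pair_tupleR.
by split=> j; [have := H (lshift h j) | have := H (rshift g j)];
  rewrite ?pair_tupleL ?pair_tupleR.
Qed.

Lemma pair_tuple_split g h n (Z : 'I_(g + h) -> 'M[C]_n) :
  pair_tuple (fun j => Z (lshift h j)) (fun j => Z (rshift g j)) = Z.
Proof.
by apply: funext => k; case: (split_ordP k) => j ->;
  rewrite ?pair_tupleL ?pair_tupleR.
Qed.

Lemma pair_tuple_lshift g h n (X : 'I_g -> 'M[C]_n) (Y : 'I_h -> 'M[C]_n) :
  (fun j => pair_tuple X Y (lshift h j)) = X.
Proof. by apply: funext => j; rewrite pair_tupleL. Qed.

Lemma pair_tuple_rshift g h n (X : 'I_g -> 'M[C]_n) (Y : 'I_h -> 'M[C]_n) :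
  (fun j => pair_tuple X Y (rshift g j)) = Y.
Proof. by apply: funext => j; rewrite pair_tupleR. Qed.

Lemma herm_LMI d g n (A : 'I_g -> 'M[C]_d) (Z : 'I_g -> 'M[C]_n) :
  herm_tuple A -> herm_tuple Z -> hermitian (LMI A Z).
Proof.
move=> HA HZ; rewrite /hermitian /LMI adjmxB adjmx1 adjmx_sum; congr (_ - _).
by apply: eq_bigr => k _; rewrite adjmx_tens HA HZ.
Qed.

Lemma hermitian_sumsq k n (Z : 'I_k -> 'M[C]_n) :
  herm_tuple Z -> hermitian (\sum_i Z i *m Z i).
Proof.
by move=> HZ; rewrite /hermitian adjmx_sum; apply: eq_bigr => i _; rewrite adjmxM HZ.
Qed.

Lemma sform_sumsq_ge0 k n (Z : 'I_k -> 'M[C]_n) v :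
  herm_tuple Z -> 0 <= sform v (\sum_i Z i *m Z i) v.
Proof.
move=> HZ; rewrite sform_sum sumr_ge0 // => i _.
by rewrite -(sqnorm_herm_mul _ (HZ i)) sqnorm_ge0.
Qed.

Lemma psd_sub_sumsq k n (Z : 'I_k -> 'M[C]_n) :
  herm_tuple Z -> (forall i u, sform u (Z i *m Z i) u <= sqnorm u) ->
  psd (k%:R%:M - \sum_i Z i *m Z i).
Proof.
move=> HZ Zle1; split.
  by rewrite /hermitian adjmxB adjmx_scalar conjC_nat hermitian_sumsq.
move=> v; rewrite -/(sform v _ v) sformDm sformNm sform_sum sform_scalar subr_ge0.
apply: le_trans (ler_sum _ (fun i _ => Zle1 i v)) _.
by rewrite sumr_const card_ord mulr_natl.
Qed.

Lemma psd_entry_bound k n r (Z : 'I_k -> 'M[C]_n) :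
  herm_tuple Z -> psd (r%:M - \sum_i Z i *m Z i) ->
  forall i a b, `|Z i a b| ^+ 2 <= r.
Proof.
move=> HZ [_ Hpos] i a b; have := Hpos (delta_mx b 0).
rewrite -/(sform _ _ _) sformDm sformNm sform_scalar sqnorm_delta mulr1 subr_ge0.
apply: le_trans; rewrite sform_sum (bigD1 i) //= -(sqnorm_herm_mul _ (HZ i)).
have -> : Z i a b = (Z i *m (delta_mx b 0 : 'cV_n)) a 0 by rewrite -colE mxE.
apply: le_trans (sqnorm_entry _ a) _; rewrite lerDl sumr_ge0 // => j _.
by rewrite -(sqnorm_herm_mul _ (HZ j)) sqnorm_ge0.
Qed.

Lemma spectrahedrop_bounded d g h (A : 'I_(g + h) -> 'M[C]_d) :
  fs_bounded (free_spectrahedron A) -> fs_bounded (spectrahedrop A).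
Proof.
move=> [r Hr]; exists r => n X [Y /[dup] DZ [HZ _]].
have [[Hherm Hpos] [HX HY]] := (Hr n _ DZ, (herm_tuple_pair X Y).1 HZ).
have splitZ : \sum_k pair_tuple X Y k *m pair_tuple X Y k =
    \sum_j X j *m X j + \sum_j Y j *m Y j.
  by rewrite big_split_ord; congr (_ + _); apply: eq_bigr => j _;
    rewrite ?pair_tupleL ?pair_tupleR.
have -> : r%:M - \sum_j X j *m X j =
    r%:M - \sum_k pair_tuple X Y k *m pair_tuple X Y k + \sum_j Y j *m Y j.
  by rewrite splitZ opprD addrA addrNK.
split; first by rewrite /hermitian adjmxD Hherm hermitian_sumsq.
move=> v; rewrite -/(sform v _ v) sformDm addr_ge0 //; last exact: sform_sumsq_ge0.
exact: Hpos.
Qed.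

Lemma unit_equiv_size g p q (X : 'I_g -> 'M[C]_p) (Y : 'I_g -> 'M[C]_q) :
  unit_equiv X Y -> p = q.
Proof.
move=> [U [UU [UU' _]]].
have := mxrankM_maxr (adjmx U) U; have := mxrankM_maxl U (adjmx U).
rewrite UU UU' !mxrank1 => hp hq.
by have := rank_leq_row U; have := rank_leq_col U; lia.
Qed.

Lemma unit_equiv_trace g p q (X : 'I_g -> 'M[C]_p) (Y : 'I_g -> 'M[C]_q) i :
  unit_equiv X Y -> \tr (Y i) = \tr (X i) /\ \tr (Y i *m Y i) = \tr (X i *m X i).
Proof.
move=> [U [_ [UU' <-]]].
have trJ (M : 'M[C]_p) : \tr (adjmx U *m M *m U) = \tr M.
  by rewrite mxtrace_mulC !mulmxA UU' mul1mx.
split; first exact: trJ.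
by rewrite -trJ !mulmxA -[_ *m U *m adjmx U]mulmxA UU' mulmx1.
Qed.

End FreeSets.

Section RowBall.
Variable C : numClosedFieldType.

Lemma mulii : 'i * 'i = -1 :> C.
Proof. by rewrite -expr2 sqrCi. Qed.

Definition slot3 (j : 'I_2) : 'I_3 := lift ord0 j.

(* With T_j = X_j + i Y_j the pencil is [[I, -T_1, -T_2], [-T_1^*, I, 0],
   [-T_2^*, 0, I]], so D_A is the row ball T_1 T_1^* + T_2 T_2^* <= I and its
   projection is the set of real parts of row contractions. *)
Definition row_ball_pencil : 'I_(2 + 2) -> 'M[C]_3 :=
  pair_tuple
    (fun j => delta_mx ord0 (slot3 j) + delta_mx (slot3 j) ord0)
    (fun j => 'i *: delta_mx ord0 (slot3 j) - 'i *: delta_mx (slot3 j) ord0).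

Definition ball_form n (X Y : 'I_2 -> 'M[C]_n) (x : 'cV[C]_n)
    (y : 'I_2 -> 'cV[C]_n) : C :=
  sqnorm x + \sum_j sqnorm (y j)
  - \sum_j (sform x (X j + 'i *: Y j) (y j) + sform (y j) (X j - 'i *: Y j) x).

Definition row_ball n (X Y : 'I_2 -> 'M[C]_n) : Prop :=
  [/\ herm_tuple X, herm_tuple Y & forall x y, 0 <= ball_form X Y x y].

Lemma herm_row_ball_pencil : herm_tuple row_ball_pencil.
Proof.
apply/herm_tuple_pair; split=> j; rewrite /hermitian ?adjmxB ?adjmxD ?adjmxZ;
  by rewrite !adjmx_delta ?conjCi ?scaleNr ?opprK addrC.
Qed.

Lemma sum_delta_mul d (i j : 'I_d) (F : 'I_d -> 'I_d -> C) :
  \sum_a \sum_b delta_mx i j a b * F a b = F i j.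
Proof.
rewrite (bigD1 i) //= [X in _ + X]big1 => [|a /negPf ai]; last first.
  by apply: big1 => b _; rewrite mxE ai mul0r.
rewrite addr0 (bigD1 j) //= [X in _ + X]big1 => [|b /negPf bj].
  by rewrite mxE !eqxx mul1r addr0.
by rewrite mxE bj andbF mul0r.
Qed.

Lemma sum_mxD_mul d (M N : 'M[C]_d) (F : 'I_d -> 'I_d -> C) :
  \sum_a \sum_b (M + N) a b * F a b =
  \sum_a \sum_b M a b * F a b + \sum_a \sum_b N a b * F a b.
Proof.
rewrite -big_split; apply: eq_bigr => a _; rewrite -big_split.
by apply: eq_bigr => b _; rewrite mxE mulrDl.
Qed.

Lemma sum_mxZ_mul d c (M : 'M[C]_d) (F : 'I_d -> 'I_d -> C) :
  \sum_a \sum_b (c *: M) a b * F a b = c * \sum_a \sum_b M a b * F a b.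
Proof.
rewrite big_distrr; apply: eq_bigr => a _; rewrite big_distrr.
by apply: eq_bigr => b _; rewrite mxE /= mulrA.
Qed.

Lemma sform_row_ball_pencil n (X Y : 'I_2 -> 'M[C]_n) v :
  sform v (LMI row_ball_pencil (pair_tuple X Y)) v =
  ball_form X Y (tslice v ord0) (fun j => tslice v (slot3 j)).
Proof.
rewrite sform_LMI /ball_form big_ord_recl; congr (_ + _ - _).
rewrite big_split_ord /= -big_split /=; apply: eq_bigr => j _.
rewrite /row_ball_pencil !pair_tupleL !pair_tupleR -scaleNr.
rewrite !sum_mxD_mul !sum_mxZ_mul !sum_delta_mul !sformDm sformNm !sformZm.
ring.
Qed.

Lemma psd_row_ball_pencilP n (X Y : 'I_2 -> 'M[C]_n) :
  herm_tuple X -> herm_tuple Y ->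
  psd (LMI row_ball_pencil (pair_tuple X Y)) <-> forall x y, 0 <= ball_form X Y x y.
Proof.
move=> HX HY; split=> [[_ H] x y | H].
  pose u (a : 'I_3) := if unlift ord0 a is Some j then y j else x.
  have -> : y = fun j => tslice (tglue u) (slot3 j).
    by apply: funext => j; rewrite tglueK /u /slot3 liftK.
  have := H (tglue u).
  by rewrite -/(sform _ _ _) sform_row_ball_pencil tglueK /u unlift_none.
split; first by apply: herm_LMI herm_row_ball_pencil _; apply/herm_tuple_pair.
by move=> v; rewrite -/(sform _ _ _) sform_row_ball_pencil.
Qed.

Lemma row_ball_spectrahedronP n (Z : 'I_(2 + 2) -> 'M[C]_n) :
  free_spectrahedron row_ball_pencil Z <->
  row_ball (fun j => Z (lshift 2 j)) (fun j => Z (rshift 2 j)).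
Proof.
rewrite -(pair_tuple_split Z) pair_tuple_lshift pair_tuple_rshift.
split=> [[/herm_tuple_pair [HX HY] /psd_row_ball_pencilP P] | [HX HY P]].
  by split=> //; exact: P.
by split; [exact/herm_tuple_pair | exact/psd_row_ball_pencilP].
Qed.

Lemma row_ball_spectrahedropP n (X : 'I_2 -> 'M[C]_n) :
  spectrahedrop row_ball_pencil X <-> exists Y, row_ball X Y.
Proof.
split=> -[Y DY]; exists Y; move: DY; rewrite row_ball_spectrahedronP;
  by rewrite pair_tuple_lshift pair_tuple_rshift.
Qed.

Definition slot n (j : 'I_2) (w : 'cV[C]_n) : 'I_2 -> 'cV[C]_n :=
  fun k => if k == j then w else 0.

Lemma ball_form_slot n (X Y : 'I_2 -> 'M[C]_n) x j w :
  ball_form X Y x (slot j w) =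
  sqnorm x + sqnorm w - (sform x (X j + 'i *: Y j) w + sform w (X j - 'i *: Y j) x).
Proof.
rewrite /ball_form (bigD1 j) //= [X in _ + (_ + X) - _]big1 => [|k /negPf kj]; last first.
  by rewrite /slot kj sqnorm0.
rewrite (bigD1 j) //= [X in _ - (_ + X)]big1 => [|k /negPf kj]; last first.
  by rewrite /slot kj sform0l sform0r addr0.
by rewrite /slot eqxx !addr0.
Qed.

(* Adding the inequalities at (u, X_j u) and at (X_j u, u) cancels Y_j. *)
Lemma row_ball_sq_le n (X Y : 'I_2 -> 'M[C]_n) j u :
  row_ball X Y -> sform u (X j *m X j) u <= sqnorm u.
Proof.
move=> [HX _ P].
have := addr_ge0 (P u (slot j (X j *m u))) (P (X j *m u) (slot j u)).
rewrite !ball_form_slot !sformDm !sformNm !sformZm.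
set F := sform u (X j *m X j) u.
have E1 : sform u (X j) (X j *m u) = F by rewrite sformMr.
have E2 : sform (X j *m u) (X j) u = F by rewrite sformMl (HX j).
rewrite E1 E2 sqnorm_herm_mul // -/F => H.
have : 0 <= (sqnorm u - F) *+ 2 by move: H; congr (0 <= _); rewrite -mulr_natl; ring.
by rewrite pmulrn_lge0 // subr_ge0.
Qed.

Lemma ball_form_rot n (X Y : 'I_2 -> 'M[C]_n) x y :
  ball_form Y (fun j => - X j) x y = ball_form X Y ('i *: x) y.
Proof.
rewrite /ball_form sqnormZ normCi expr1n mul1r; congr (_ - _).
apply: eq_bigr => j _; rewrite !(sformDm, sformZm, sformNm, sformZl, sformZr) conjCi.
ring: mulii.
Qed.

Lemma row_ball_rot n (X Y : 'I_2 -> 'M[C]_n) :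
  row_ball X Y -> row_ball Y (fun j => - X j).
Proof.
move=> [HX HY P]; split=> // [j | x y]; last by rewrite ball_form_rot.
by rewrite /hermitian adjmxN (HX j).
Qed.

Lemma row_ball_spectrahedron_bounded :
  fs_bounded (free_spectrahedron row_ball_pencil).
Proof.
exists (2 + 2)%:R => n Z /[dup] [[HZ _]] /row_ball_spectrahedronP RB.
apply: psd_sub_sumsq => // k u; case: (split_ordP k) => j ->.
  exact: row_ball_sq_le RB.
by have := row_ball_sq_le j u (row_ball_rot RB).
Qed.

Lemma ball_form_conj n (X Y : 'I_2 -> 'M[C]_n) x y :
  ball_form (fun j => conjmx_entry (X j)) (fun j => - conjmx_entry (Y j)) x y =
  (ball_form X Y (conjmx_entry x) (fun j => conjmx_entry (y j)))^*.
Proof.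
rewrite /ball_form rmorphB rmorphD !rmorph_sum /= !sqnorm_conjmx; congr (_ + _ - _).
  by apply: eq_bigr => j _; rewrite sqnorm_conjmx.
apply: eq_bigr => j _; rewrite !(sformDm, sformNm, sformZm) !sform_conjmx.
by rewrite !(rmorphD, rmorphB, rmorphN, rmorphM) /= conjCi; ring.
Qed.

Lemma row_ball_conj n (X Y : 'I_2 -> 'M[C]_n) :
  row_ball X Y ->
  row_ball (fun j => conjmx_entry (X j)) (fun j => - conjmx_entry (Y j)).
Proof.
move=> [HX HY P]; split=> [j|j|x y]; last by rewrite ball_form_conj conjC_ge0.
- by rewrite /hermitian adjmx_conjmx (HX j).
- by rewrite /hermitian adjmxN adjmx_conjmx (HY j).
Qed.

Lemma row_ball_conj_closed : fs_conj_closed (spectrahedrop row_ball_pencil).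
Proof.
move=> n X /row_ball_spectrahedropP [Y /row_ball_conj RB].
by apply/row_ball_spectrahedropP; exists (fun j => - conjmx_entry (Y j)).
Qed.

(* Real and imaginary parts of the dilation [[T_j, 0], [z_j^*, 0]] of T_j. *)
Definition dilate_re n (X : 'I_2 -> 'M[C]_n) (z : 'I_2 -> 'cV[C]_n) :
    'I_2 -> 'M[C]_(n + 1) :=
  fun j => block_mx (X j) (2^-1 *: z j) (2^-1 *: adjmx (z j)) 0.

Definition dilate_im n (Y : 'I_2 -> 'M[C]_n) (z : 'I_2 -> 'cV[C]_n) :
    'I_2 -> 'M[C]_(n + 1) :=
  fun j => block_mx (Y j) (('i / 2) *: z j) (- ('i / 2) *: adjmx (z j)) 0.

Lemma dilate_reDim n (X Y : 'I_2 -> 'M[C]_n) z j :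
  dilate_re X z j + 'i *: dilate_im Y z j =
  block_mx (X j + 'i *: Y j) 0 (adjmx (z j)) 0.
Proof.
rewrite /dilate_re /dilate_im scale_block_mx add_block_mx !scalerA -!scalerDl.
have -> : 2^-1 + 'i * ('i / 2) = 0 :> C by field: mulii.
have -> : 2^-1 + 'i * - ('i / 2) = 1 :> C by field: mulii.
by rewrite scale0r scale1r scaler0 addr0.
Qed.

Lemma dilate_reBim n (X Y : 'I_2 -> 'M[C]_n) z j :
  dilate_re X z j - 'i *: dilate_im Y z j =
  block_mx (X j - 'i *: Y j) (z j) 0 0.
Proof.
rewrite /dilate_re /dilate_im scale_block_mx opp_block_mx add_block_mx.
rewrite !scalerA -!scalerBl.
have -> : 2^-1 - 'i * ('i / 2) = 1 :> C by field: mulii.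
have -> : 2^-1 - 'i * - ('i / 2) = 0 :> C by field: mulii.
by rewrite scale0r scale1r scaler0 subr0.
Qed.

Lemma herm_dilate_re n (X : 'I_2 -> 'M[C]_n) z :
  herm_tuple X -> herm_tuple (dilate_re X z).
Proof.
move=> HX j; rewrite /hermitian /dilate_re adjmx_block !adjmxZ adjmxK adjmx0 (HX j).
by rewrite fmorphV rmorph_nat.
Qed.

Lemma herm_dilate_im n (Y : 'I_2 -> 'M[C]_n) z :
  herm_tuple Y -> herm_tuple (dilate_im Y z).
Proof.
move=> HY j; rewrite /hermitian /dilate_im adjmx_block !adjmxZ adjmxK adjmx0 (HY j).
by rewrite !(rmorphN, rmorphM, fmorphV, rmorph_nat) /= conjCi mulNr opprK.
Qed.

Lemma ball_form_dilate n (X Y : 'I_2 -> 'M[C]_n) z x (nu : 'cV[C]_1) y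
    (mu : 'I_2 -> 'cV[C]_1) :
  herm_tuple X -> herm_tuple Y -> \sum_j (X j + 'i *: Y j) *m z j = 0 ->
  ball_form (dilate_re X z) (dilate_im Y z) (col_mx x nu)
    (fun j => col_mx (y j) (mu j)) =
  ball_form X Y x (fun j => y j - z j *m nu)
  + sqnorm nu * (1 - \sum_j sqnorm (z j)) + \sum_j sqnorm (mu j).
Proof.
move=> HX HY Hz.
have adjT j : adjmx (X j + 'i *: Y j) = X j - 'i *: Y j.
  by rewrite adjmxD adjmxZ (HX j) (HY j) conjCi scaleNr.
have kerL : sform x (\sum_j (X j + 'i *: Y j) *m z j) nu = 0 by rewrite Hz sform0m.
have kerR : sform nu (adjmx (\sum_j (X j + 'i *: Y j) *m z j)) x = 0.
  by rewrite Hz adjmx0 sform0m.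
rewrite adjmx_sum !sform_sum !big_ord_recl !big_ord0 in kerL kerR.
rewrite !adjmxM !adjT !addr0 in kerR; rewrite !addr0 in kerL.
move/eqP: kerL; rewrite addr_eq0 => /eqP kerL.
move/eqP: kerR; rewrite addr_eq0 => /eqP kerR.
rewrite /ball_form !big_ord_recl !big_ord0 !dilate_reDim !dilate_reBim.
rewrite !sform_block !sqnorm_col !sform0m !sqnormB.
rewrite !(sformDl, sformDr, sformNl, sformNr, sformMl, sformMr) !sqnorm_mul_cV1.
by rewrite !mulmx1 !mul1mx; ring: kerL kerR.
Qed.

Lemma row_ball_dilate n (X Y : 'I_2 -> 'M[C]_n) z :
  row_ball X Y -> \sum_j (X j + 'i *: Y j) *m z j = 0 ->
  \sum_j sqnorm (z j) <= 1 -> row_ball (dilate_re X z) (dilate_im Y z).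
Proof.
move=> [HX HY P] Hz Hn; split; [exact: herm_dilate_re | exact: herm_dilate_im |].
move=> x y; rewrite -[x]vsubmxK.
have -> : y = fun j => col_mx (usubmx (y j)) (dsubmx (y j)).
  by apply: funext => j; rewrite vsubmxK.
rewrite ball_form_dilate //; apply: addr_ge0; first apply: addr_ge0.
- exact: P.
- by rewrite mulr_ge0 ?sqnorm_ge0 ?subr_ge0.
- by rewrite sumr_ge0 // => j _; exact: sqnorm_ge0.
Qed.

Lemma exists_unit_kernel n (T : 'I_2 -> 'M[C]_n.+1) :
  exists z : 'I_2 -> 'cV[C]_n.+1,
    \sum_j T j *m z j = 0 /\ \sum_j sqnorm (z j) = 1.
Proof.
pose R := row_mx (T ord0) (T (lift ord0 ord0)).
pose K := kermx R^T.
have K0 : K != 0.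
  by rewrite -mxrank_eq0 mxrank_ker; have := rank_leq_col R^T; lia.
pose w := (nz_row K)^T.
have w0 : w != 0 by rewrite trmx_eq0 nz_row_eq0.
have Rw : R *m w = 0.
  by apply: trmx_inj; rewrite trmx_mul trmxK trmx0; apply/sub_kermxP/nz_row_sub.
pose w' := (sqrtC (sqnorm w))^-1 *: w.
exists (fun j => if j == ord0 then usubmx w' else dsubmx w').
rewrite !big_ord_recl !big_ord0 /= !addr0; split.
  by rewrite -mul_row_col vsubmxK -scalemxAr Rw scaler0.
by rewrite -sqnorm_col vsubmxK sqnorm_normalize.
Qed.

Lemma trace_dilate_re n (X : 'I_2 -> 'M[C]_n) z j :
  \tr (dilate_re X z j) = \tr (X j).
Proof. by rewrite /dilate_re mxtrace_block mxtrace0 addr0. Qed.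

Lemma trace_dilate_re_sq n (X : 'I_2 -> 'M[C]_n) z j :
  \tr (dilate_re X z j *m dilate_re X z j) = \tr (X j *m X j) + 2^-1 * sqnorm (z j).
Proof.
rewrite /dilate_re mulmx_block mxtrace_block mxtraceD mulmx0 addr0 mxtrace_mulC.
rewrite -!scalemxAl -!scalemxAr !scalerA !mxtraceZ /sqnorm /sform mulmx1 -trace_mx11.
by rewrite (mxtrace_mulC (z j)); field.
Qed.

Lemma mxtrace_sqr1 (Z : 'M[C]_1) : \tr (Z *m Z) = \tr Z ^+ 2.
Proof. by rewrite !trace_mx11 mxE big_ord1 expr2. Qed.

Lemma col1_isometry n : adjmx (col_mx 1%:M 0 : 'M[C]_(n + 1, n)) *m col_mx 1%:M 0 = 1%:M.
Proof. by rewrite adjmx_col mul_row_col adjmx1 adjmx0 mulmx1 mul0mx addr0. Qed.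

Lemma compress_dilate_re n (X : 'I_2 -> 'M[C]_n) z j :
  adjmx (col_mx 1%:M 0 : 'M[C]_(n + 1, n)) *m dilate_re X z j *m col_mx 1%:M 0 = X j.
Proof.
rewrite adjmx_col adjmx1 adjmx0 /dilate_re mul_row_block mul_row_col.
by rewrite !mul1mx !mul0mx !addr0 mulmx1 mulmx0 addr0.
Qed.

Lemma unit_equiv_dilate_re n (X : 'I_2 -> 'M[C]_n) z (Z : 'I_2 -> 'M[C]_1) j :
  unit_equiv (dilate_re X z) (fun i => block_mx (X i) 0 0 (Z i)) -> sqnorm (z j) = 0.
Proof.
move=> /(unit_equiv_trace j) []; rewrite trace_dilate_re trace_dilate_re_sq.
rewrite mulmx_block !mulmx0 !mul0mx !addr0 add0r !mxtrace_block mxtrace_sqr1.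
move=> trW /addrI.
have trZ : \tr (Z j) = 0 by apply: (addrI (\tr (X j))); rewrite trW addr0.
by rewrite trZ expr2 mulr0 => /esym/eqP; rewrite mulf_eq0 invr_eq0 pnatr_eq0 => /eqP.
Qed.

Lemma row_ball_no_free_extreme n (X : 'I_2 -> 'M[C]_n.+1) :
  ~ free_extreme (spectrahedrop row_ball_pencil) X.
Proof.
move=> [/row_ball_spectrahedropP [Y RB] Hext].
have [z [Hz Hn]] := exists_unit_kernel (fun j => X j + 'i *: Y j).
have KW : spectrahedrop row_ball_pencil (dilate_re X z).
  apply/row_ball_spectrahedropP; exists (dilate_im Y z).
  by apply: row_ball_dilate; rewrite ?Hn.
pose V : 'M[C]_(n.+1 + 1, n.+1) := col_mx 1%:M 0.
have V0 : V != 0.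
  apply/eqP => /matrixP /(_ (lshift 1 0) 0).
  by rewrite col_mxEu !mxE eqxx => /eqP; rewrite oner_eq0.
have XW i : X i = \sum_(k < 1) adjmx V *m dilate_re X z i *m V.
  by rewrite big_ord1 compress_dilate_re.
have := Hext 1 _ _ (fun _ => V) (fun _ => KW) (fun _ => V0).
rewrite big_ord1 => /(_ (col1_isometry _) XW ord0) [].
  by move/unit_equiv_size; lia.
move=> [m [Z [_ EZ]]]; have m1 : m = 1%N by have := unit_equiv_size EZ; lia.
subst m; move: Hn; rewrite !big_ord_recl big_ord0 !(unit_equiv_dilate_re _ EZ).
by rewrite !add0r => /eqP; rewrite eq_sym oner_eq0.
Qed.

End RowBall.

Section ComplexParts.
Variable R : realType.
Local Notation Re := (@complex.Re R).
Local Notation Im := (@complex.Im R).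

Lemma ReD (x y : R[i]) : Re (x + y) = Re x + Re y. Proof. by case: x; case: y. Qed.
Lemma ImD (x y : R[i]) : Im (x + y) = Im x + Im y. Proof. by case: x; case: y. Qed.
Lemma ReN (x : R[i]) : Re (- x) = - Re x. Proof. by case: x. Qed.
Lemma ImN (x : R[i]) : Im (- x) = - Im x. Proof. by case: x. Qed.
Lemma ReM (x y : R[i]) : Re (x * y) = Re x * Re y - Im x * Im y.
Proof. by case: x; case: y. Qed.
Lemma ImM (x y : R[i]) : Im (x * y) = Re x * Im y + Im x * Re y.
Proof. by case: x; case: y. Qed.
Lemma ReJ (x : R[i]) : Re x^* = Re x. Proof. by case: x. Qed.
Lemma ImJ (x : R[i]) : Im x^* = - Im x. Proof. by case: x. Qed.

Lemma parts_le_sqr_norm (z r : R[i]) :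
  `|z| ^+ 2 <= r -> `|Re z| <= 1 + Re r /\ `|Im z| <= 1 + Re r.
Proof.
case: z => a b; rewrite normc_def -rmorphXn sqr_sqrtr ?addr_ge0 ?sqr_ge0 //.
case: r => p q; rewrite lecE /= => /andP[_ H].
by split; rewrite ler_norml; apply/andP; split; nra.
Qed.

Lemma parts_lt_norm (z : R[i]) (e : R) :
  `|z| < (e%:C)%C -> `|Re z| < e /\ `|Im z| < e.
Proof.
case: z => a b; rewrite normc_def ltcR => lt_e; split; apply: le_lt_trans lt_e.
  by rewrite -sqrtr_sqr ler_wsqrtr // lerDl sqr_ge0.
by rewrite -sqrtr_sqr ler_wsqrtr // lerDr sqr_ge0.
Qed.

End ComplexParts.

Section ComplexContinuity.
Local Open Scope classical_set_scope.
Variables (R : realType) (T : topologicalType).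
Local Notation Re := (@complex.Re R).
Local Notation Im := (@complex.Im R).

Definition ccontinuous (f : T -> R[i]) :=
  continuous (fun w => Re (f w)) /\ continuous (fun w => Im (f w)).

Lemma ccontinuous_cst c : ccontinuous (fun _ => c).
Proof. by split=> w; apply: cst_continuous. Qed.

Lemma ccontinuousD f g :
  ccontinuous f -> ccontinuous g -> ccontinuous (fun w => f w + g w).
Proof.
move=> [f1 f2] [g1 g2]; split=> w.
  by under eq_fun do rewrite ReD; exact: continuousD (f1 w) (g1 w).
by under eq_fun do rewrite ImD; exact: continuousD (f2 w) (g2 w).
Qed.

Lemma ccontinuousN f : ccontinuous f -> ccontinuous (fun w => - f w).
Proof.
move=> [f1 f2]; split=> w.
  by under eq_fun do rewrite ReN; exact: continuousN (f1 w).
by under eq_fun do rewrite ImN; exact: continuousN (f2 w).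
Qed.

Lemma ccontinuousB f g :
  ccontinuous f -> ccontinuous g -> ccontinuous (fun w => f w - g w).
Proof. by move=> cf cg; apply: ccontinuousD cf (ccontinuousN cg). Qed.

Lemma ccontinuousM f g :
  ccontinuous f -> ccontinuous g -> ccontinuous (fun w => f w * g w).
Proof.
move=> [f1 f2] [g1 g2]; split=> w.
  under eq_fun do rewrite ReM.
  exact: continuousB (continuousM (f1 w) (g1 w)) (continuousM (f2 w) (g2 w)).
under eq_fun do rewrite ImM.
exact: continuousD (continuousM (f1 w) (g2 w)) (continuousM (f2 w) (g1 w)).
Qed.

Lemma ccontinuous_conj f : ccontinuous f -> ccontinuous (fun w => (f w)^*).
Proof.
move=> [f1 f2]; split=> w; first by under eq_fun do rewrite ReJ; exact: f1.
by under eq_fun do rewrite ImJ; exact: continuousN (f2 w).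
Qed.

Lemma ccontinuous_sum I (r : seq I) (P : pred I) (F : I -> T -> R[i]) :
  (forall i, ccontinuous (F i)) -> ccontinuous (fun w => \sum_(i <- r | P i) F i w).
Proof.
move=> cF; elim: r => [|i r IH].
  by under eq_fun do rewrite big_nil; exact: ccontinuous_cst.
under eq_fun do rewrite big_cons; case: (P i); last exact: IH.
exact: ccontinuousD.
Qed.

Lemma closed_forall I (P : I -> set T) :
  (forall i, closed (P i)) -> closed [set w | forall i, P i w].
Proof.
move=> cP w clw i; apply: cP => B /clw [v [Pv Bv]].
by exists v; split; [exact: Pv | exact: Bv].
Qed.

Lemma closed_ccontinuous_eq0 f : ccontinuous f -> closed [set w | f w = 0].
Proof.
move=> [f1 f2].
have -> : [set w | f w = 0] = (fun w => Re (f w)) @^-1` [set 0]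
    `&` (fun w => Im (f w)) @^-1` [set 0].
  apply/seteqP; split=> w /=; first by move->.
  by case: (f w) => a b /= [-> ->].
by apply: closedI; apply: preimage_closed; rewrite ?closed_eq // => w _.
Qed.

Lemma closed_ccontinuous_ge0 f : ccontinuous f -> closed [set w | 0 <= f w].
Proof.
move=> [f1 f2].
have -> : [set w | 0 <= f w] = (fun w => Im (f w)) @^-1` [set 0]
    `&` (fun w => Re (f w)) @^-1` [set x | 0 <= x].
  apply/seteqP; split=> w /=; case: (f w) => a b; rewrite lecE /=.
    by move=> /andP[/eqP -> ->].
  by move=> [-> ->]; rewrite eqxx.
by apply: closedI; apply: preimage_closed; rewrite ?closed_eq ?closed_ge // => w _.
Qed.

Lemma ccontinuous_sform m p (u : 'cV[R[i]]_m) (M : T -> 'M[R[i]]_(m, p)) v :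
  (forall a b, ccontinuous (fun w => M w a b)) ->
  ccontinuous (fun w => sform u (M w) v).
Proof.
move=> cM; under eq_fun do rewrite sformE.
do 2![apply: ccontinuous_sum => ?].
by apply: ccontinuousM; [apply: ccontinuousM |]; rewrite ?cM //; exact: ccontinuous_cst.
Qed.

Lemma closed_hermitian m (M : T -> 'M[R[i]]_m) :
  (forall a b, ccontinuous (fun w => M w a b)) -> closed [set w | hermitian (M w)].
Proof.
move=> cM.
have -> : [set w | hermitian (M w)] =
    [set w | forall a b, M w a b - (M w b a)^* = 0].
  apply/seteqP; split=> w /= H.
    by move=> a b; rewrite -[in M w a b]H adjmxE subrr.
  by apply/matrixP => a b; apply/eqP; rewrite adjmxE eq_sym -subr_eq0 H.
apply: closed_forall => a; apply: closed_forall => b.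
by apply: closed_ccontinuous_eq0; apply: ccontinuousB; last apply: ccontinuous_conj.
Qed.

Lemma closed_psd m (M : T -> 'M[R[i]]_m) :
  (forall a b, ccontinuous (fun w => M w a b)) -> closed [set w | psd (M w)].
Proof.
move=> cM; apply: closedI; first exact: closed_hermitian.
apply: closed_forall => v; exact: closed_ccontinuous_ge0 (ccontinuous_sform _ _ cM).
Qed.

End ComplexContinuity.

Section Coordinates.
Local Open Scope classical_set_scope.
Variables (R : realType) (k n : nat).
Local Notation Re := (@complex.Re R).
Local Notation Im := (@complex.Im R).
Local Notation N := (k * (2 * (n * n)))%N.

Definition coord_idx (i : 'I_k) (r : 'I_2) (a b : 'I_n) : 'I_N :=
  mxtens_index (i, mxtens_index (r, mxtens_index (a, b))).

Lemma coord_idx_ind (P : 'I_N -> Prop) :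
  (forall i r a b, P (coord_idx i r a b)) -> forall c, P c.
Proof.
move=> H c; case: (mxtens_indexP c) => i t; case: (mxtens_indexP t) => r ab.
by case: (mxtens_indexP ab) => a b; exact: H.
Qed.

Definition coords (Z : 'I_k -> 'M[R[i]]_n) : 'rV[R]_N :=
  \row_c (let: (i, t) := mxtens_unindex c in
          let: (r, ab) := mxtens_unindex t in
          let: (a, b) := mxtens_unindex ab in
          if r == ord0 then Re (Z i a b) else Im (Z i a b)).

Definition of_coords (w : 'rV[R]_N) : 'I_k -> 'M[R[i]]_n :=
  fun i => \matrix_(a, b)
    complex.Complex (w 0 (coord_idx i ord0 a b)) (w 0 (coord_idx i ord_max a b)).

Lemma coordsE Z i r a b :
  coords Z 0 (coord_idx i r a b) = if r == ord0 then Re (Z i a b) else Im (Z i a b).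
Proof. by rewrite mxE !mxtens_indexK. Qed.

Lemma coordsK : cancel coords of_coords.
Proof.
move=> Z; apply: funext => i; apply/matrixP => a b.
by rewrite mxE !coordsE /=; case: (Z i a b).
Qed.

Lemma ccontinuous_of_coords i a b : ccontinuous (fun w => of_coords w i a b).
Proof. by under eq_fun do rewrite mxE; split=> /=; exact: coord_continuous. Qed.

Lemma of_coordsK : cancel of_coords coords.
Proof.
move=> w; apply/rowP; apply: coord_idx_ind => i r a b; rewrite coordsE mxE.
suff [->|->] : r = ord0 \/ r = ord_max by [].
by case: r => -[|[|//]] ?; [left | right]; apply: val_inj.
Qed.

Definition cube (r : R) : set 'rV[R]_N := [set w | forall c, `[-r, r] (w 0 c)].

Lemma compact_cube r : compact (cube r).
Proof. exact: (rV_compact (fun=> @segment_compact R (- r) r)). Qed.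

Lemma coords_cube (r : R[i]) (Z : 'I_k -> 'M[R[i]]_n) :
  herm_tuple Z -> psd (r%:M - \sum_i Z i *m Z i) -> cube (1 + Re r) (coords Z).
Proof.
move=> HZ HP; apply: coord_idx_ind => i s a b.
have [hRe hIm] := parts_le_sqr_norm (psd_entry_bound HZ HP i a b).
by rewrite coordsE /= in_itv /= -ler_norml; case: (_ == _).
Qed.

End Coordinates.

Section SpectrahedropClosed.
Local Open Scope classical_set_scope.
Variables (R : realType) (d g h : nat) (A : 'I_(g + h) -> 'M[R[i]]_d).
Local Notation C := R[i].
Local Notation M n := (2 * (n * n))%N.

Lemma colsub_continuous m p (f : 'I_p -> 'I_m) :
  continuous (colsub f : 'rV[R]_m -> 'rV[R]_p).
Proof.
move=> x B /nbhs_ballP [e e0 sB]; apply/nbhs_ballP; exists e => // y [_ xy].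
by apply: sB; split=> // i j; rewrite !mxE; exact: xy.
Qed.

Definition head_idx n (c : 'I_(g * M n)) : 'I_((g + h) * M n) :=
  let: (j, t) := mxtens_unindex c in mxtens_index (lshift h j, t).

Lemma colsub_head_coords n (Z : 'I_(g + h) -> 'M[C]_n) :
  colsub (@head_idx n) (coords Z) = coords (fun j => Z (lshift h j)).
Proof.
apply/rowP; apply: coord_idx_ind => j r a b.
by rewrite mxE /head_idx mxtens_indexK !coordsE.
Qed.

Lemma of_coords_head n (w : 'rV[R]_((g + h) * M n)) :
  of_coords (colsub (@head_idx n) w) = fun j => of_coords w (lshift h j).
Proof.
by apply: funext => j; apply/matrixP => a b; rewrite !mxE /head_idx !mxtens_indexK.
Qed.

Lemma closed_spectrahedron_coords n :
  closed [set w : 'rV[R]_((g + h) * M n) | free_spectrahedron A (of_coords w)].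
Proof.
apply: closedI.
  apply: closed_forall => k; apply: closed_hermitian => a b.
  exact: ccontinuous_of_coords.
apply: closed_psd => p q; rewrite /LMI.
under eq_fun do rewrite !mxE summxE.
apply: ccontinuousB; first exact: ccontinuous_cst.
apply: ccontinuous_sum => k.
case: (mxtens_indexP p) => a i; case: (mxtens_indexP q) => b j.
under eq_fun do rewrite tensmxE.
by apply: ccontinuousM; [exact: ccontinuous_cst | exact: ccontinuous_of_coords].
Qed.

(* A bounded free spectrahedron is compact at every level, so its projection
   is closed. *)
Lemma spectrahedrop_closed :
  fs_bounded (free_spectrahedron A) -> fs_closed (spectrahedrop A).
Proof.
move=> [r Hr] n X Happ.
pose D := [set w : 'rV[R]_((g + h) * M n) | free_spectrahedron A (of_coords w)].
have cD : compact D.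
  apply: (subclosed_compact (closed_spectrahedron_coords (n := n))
    (compact_cube (k := g + h) (n := n) (r := 1 + complex.Re r))).
  move=> w [Hw Pw]; rewrite -[w]of_coordsK; exact: coords_cube (Hr n _ (conj Hw Pw)).
have clP : closed (colsub (@head_idx n) @` D).
  apply: compact_closed; first exact: norm_hausdorff.
  apply: continuous_compact cD; apply: continuous_subspaceT; exact: colsub_continuous.
have /clP [w Dw wX] : closure (colsub (@head_idx n) @` D) (coords X).
  move=> B /nbhs_ballP [e e0 sB].
  have [|Y [[W DYW] close]] := Happ (e%:C)%C; first by rewrite ltcR.
  exists (colsub (@head_idx n) (coords (pair_tuple Y W))); split.
    exists (coords (pair_tuple Y W)); last by [].
    by rewrite /D /= coordsK.
  apply: sB; rewrite colsub_head_coords pair_tuple_lshift; split=> // u; rewrite [u]ord1.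
  apply: coord_idx_ind => j s a b; rewrite !coordsE.
  have [hRe hIm] := parts_lt_norm (close j a b).
  by case: (s == ord0); rewrite /ball /= distrC -?ReN -?ImN -?ReD -?ImD.
exists (fun j => of_coords w (rshift g j)).
have -> : X = fun j => of_coords w (lshift h j) by rewrite -of_coords_head wX coordsK.
by rewrite pair_tuple_split.
Qed.

End SpectrahedropClosed.

Theorem mainTheorem18 (R : realType) :
  exists (d g h : nat) (A : 'I_(g + h) -> 'M[R[i]]_d),
    herm_tuple A /\
    fs_closed (spectrahedrop A) /\
    fs_bounded (spectrahedrop A) /\
    fs_conj_closed (spectrahedrop A) /\
    (forall (n : nat) (X : 'I_g -> 'M[R[i]]_n.+1),
        ~ free_extreme (spectrahedrop A) X).
Proof.
have bounded := @row_ball_spectrahedron_bounded R[i].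
exists 3%N, 2%N, 2%N, (row_ball_pencil _); split; first exact: herm_row_ball_pencil.
split; first exact: spectrahedrop_closed.
split; first exact: spectrahedrop_bounded.
split; first exact: row_ball_conj_closed.
exact: row_ball_no_free_extreme.
Qed.
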